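(* Let $\mathcal{X}$ be a symmetric configuration $v_3$ with strong chromatic number 5, and suppose there is a set $T$ of at most 2 points of $\mathcal{X}$ and an assignment of 4 colours to the points not in $T$ such that no two points not in $T$ lying in a common block receive the same colour. Then $\mathcal{X}$ has weak chromatic number 2 (equivalently, $\mathcal{X}$ has a blocking set).
   Context: A symmetric configuration $v_3$ consists of a set of $v$ points and a collection of $v$ blocks, each block being a 3-element subset of the points, such that every point lies in exactly 3 blocks and any two distinct points lie in at most one common block. A strong colouring is an assignment of colours to points such that the three points of every block receive three distinct colours; the strong chromatic number is the minimum number of colours in a strong colouring. A weak colouring is an assignment of colours to points such that no block is monochromatic; the weak chromatic number is the minimum number of colours in a weak colouring. A blocking set is a subset $Q$ of the points such that every block contains at least one point of $Q$ and at least one point not in $Q$. *)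

From mathcomp Require Import all_boot.
Set Implicit Arguments. Unset Strict Implicit. Unset Printing Implicit Defensive.

Definition sym_config_v3 (P B : finType) (blk : B -> {set P}) : Prop :=
  [/\ #|P| = #|B|,
      (forall b, #|blk b| = 3),
      (forall x : P, #|[set b | x \in blk b]| = 3)
    & (forall x y : P, x != y -> #|[set b | (x \in blk b) && (y \in blk b)]| <= 1)].

Definition strong_colouring (P B : finType) (blk : B -> {set P}) (k : nat)
  (c : P -> 'I_k) : Prop :=
  forall b x y, x \in blk b -> y \in blk b -> x != y -> c x != c y.

Definition strong_chromatic_number (P B : finType) (blk : B -> {set P}) (n : nat) : Prop :=
  (exists c : P -> 'I_n, strong_colouring blk c) /\
  (forall k, k < n -> ~ exists c : P -> 'I_k, strong_colouring blk c).

Definition weak_colouring (P B : finType) (blk : B -> {set P}) (k : nat)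
  (c : P -> 'I_k) : Prop :=
  forall b, exists x, exists y, [/\ x \in blk b, y \in blk b & c x != c y].

Definition weak_chromatic_number (P B : finType) (blk : B -> {set P}) (n : nat) : Prop :=
  (exists c : P -> 'I_n, weak_colouring blk c) /\
  (forall k, k < n -> ~ exists c : P -> 'I_k, weak_colouring blk c).

From mathcomp Require Import all_boot.
From mathcomp Require Import zify.
Set Implicit Arguments. Unset Strict Implicit. Unset Printing Implicit Defensive.

(* Let c be a 4-colouring that is proper on every block away from
   two points u <> v (the exceptional set T is contained in {u, v}).  The four
   colours can be split into two pairs in three ways m; sending each pair to
   one colour and giving u and v arbitrary colours cu, cv yields 12 candidate
   2-colourings.  If one of them has no monochromatic block we are done (one
   colour never suffices, since blocks exist).  Otherwise every candidate
   (m, cu, cv) has a monochromatic block.  Such a block cannot avoid u and v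
   (its three colours are distinct), so it is a block through u only whose two
   other points lie in class cu of m, symmetrically a block through v only, or
   a block through both u and v when cu = cv.  A block through u only has one
   such type (m, class), and there are at most 3 - [u, v collinear] of them;
   likewise for v.  The demands of the four candidates of each splitting m
   exceed this supply. *)

(* The three splittings of four colours into two pairs: pair_class m k says
   whether colour k lies in the pair {0, m + 1}. *)
Definition pair_class (m : 'I_3) (k : 'I_4) : bool := (val k == 0) || (val k == m.+1).

Lemma pair_class_unique (a b : 'I_4) (m m' : 'I_3) :
  a != b -> pair_class m a = pair_class m b -> pair_class m' a = pair_class m' b ->
  m = m'.
Proof.
case: a b m m' => [a Ha] [b Hb] [m Hm] [m' Hm']; rewrite /pair_class -val_eqE /=.
move=> ab Em Em'; apply/val_inj => /=; move: a b m m' Ha Hb Hm Hm' ab Em Em'.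
by do 4!case=> [|[|[|[|?]]]] //.
Qed.

Lemma pair_class_three (a b d : 'I_4) (m : 'I_3) :
  a != b -> a != d -> b != d ->
  pair_class m a = pair_class m b -> pair_class m a = pair_class m d -> False.
Proof.
case: a b d m => [a Ha] [b Hb] [d Hd] [m Hm]; rewrite /pair_class -!val_eqE /=.
by move: a b d m Ha Hb Hd Hm; do 4!case=> [|[|[|[|?]]]] //.
Qed.

Lemma card_splitting_class (F : 'I_3 * bool -> bool) :
  #|[set p | F p]| = \sum_(m < 3) (F (m, true) + F (m, false)).
Proof.
rewrite -sum1_card big_mkcond /=.
transitivity (\sum_(p : 'I_3 * bool) (F (p.1, p.2) : nat)).
  by apply: eq_bigr => -[m b] _; rewrite inE; case: (F (m, b)).
rewrite -(pair_bigA _ (fun m b => (F (m, b) : nat))).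
by apply: eq_bigr => m _; rewrite big_bool.
Qed.

Lemma card3_other_two (P : finType) (A : {set P}) (u : P) :
  #|A| = 3 -> u \in A -> exists y z, [/\ y != z, y \in A :\ u & z \in A :\ u].
Proof.
move=> A3 uA; have : 1 < #|A :\ u| by move: (cardsD1 u A); rewrite uA A3 add1n => -[<-].
by case/card_gt1P => y [z [yA zA yz]]; exists y, z.
Qed.

Lemma two_point_cover (P : finType) (T : {set P}) (p q : P) :
  p != q -> #|T| <= 2 -> exists t s, t != s /\ T \subset [set t; s].
Proof.
move=> pq T2; have : #|T| = 0 \/ #|T| = 1 \/ #|T| = 2 by lia.
case=> [/cards0_eq -> | [/eqP/cards1P[t ->] | /eqP/cards2P[t [s [ts ->]]]]].
- by exists p, q; rewrite sub0set.
- exists t, (if t == p then q else p); split.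
    by case: ifP => [/eqP -> | /negbT].
  by rewrite sub1set !inE eqxx.
- by exists t, s.
Qed.

Lemma ord_lt2_eq (k : nat) (i j : 'I_k) : k < 2 -> i = j.
Proof. by move=> k2; apply: val_inj => /=; move: (ltn_ord i) (ltn_ord j); lia. Qed.

Section OneSidedBlocks.

Variables (P B : finType) (blk : B -> {set P}).
Hypothesis conf : sym_config_v3 blk.

Definition proper_outside (D : {set P}) (c : P -> 'I_4) : Prop :=
  forall b x y, x \in blk b -> y \in blk b -> x != y ->
    x \notin D -> y \notin D -> c x != c y.

Lemma proper_outside_sub (D D' : {set P}) (c : P -> 'I_4) :
  D \subset D' -> proper_outside D c -> proper_outside D' c.
Proof.
move=> DD' Hc b x y xb yb xy xD yD.
exact: Hc xb yb xy (contra (subsetP DD' x) xD) (contra (subsetP DD' y) yD).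
Qed.

Definition collinear (u v : P) : bool := [exists b, (u \in blk b) && (v \in blk b)].

Lemma collinearC (u v : P) : collinear u v = collinear v u.
Proof. by apply/existsP/existsP => -[b Hb]; exists b; rewrite andbC. Qed.

Lemma card_blocks_avoiding (u v : P) :
  #|[set b | (u \in blk b) && (v \notin blk b)]| + collinear u v <= 3.
Proof.
case: conf => _ _ deg3 _.
have [/existsP[b0 /andP[ub0 vb0]] | _] := boolP (collinear u v); last first.
  rewrite addn0 -(deg3 u); apply: subset_leq_card.
  by apply/subsetP => b; rewrite !inE => /andP[].
have sub : [set b | (u \in blk b) && (v \notin blk b)] \subset [set b | u \in blk b] :\ b0.
  apply/subsetP => b; rewrite !inE => /andP[ub vb]; rewrite ub andbT.
  by apply: contraNneq vb => ->.
have := cardsD1 b0 [set b | u \in blk b]; rewrite deg3 inE ub0 add1n => -[Ecard].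
by rewrite addn1 ltnS Ecard; apply: subset_leq_card.
Qed.

Variable c : P -> 'I_4.

Definition one_sided_block (u v : P) (m : 'I_3) (sg : bool) (b : B) : bool :=
  [&& u \in blk b, v \notin blk b &
      [forall x in blk b, (x != u) ==> (pair_class m (c x) == sg)]].

Definition one_sided (u v : P) (m : 'I_3) (sg : bool) : bool :=
  [exists b, one_sided_block u v m sg b].

Section FixedPair.

Variables u v : P.
Hypothesis proper : proper_outside [set u; v] c.

(* The two other points of a block through u only carry distinct colours, so
   the block is one-sided for at most one splitting and class. *)
Lemma one_sided_block_unique (m m' : 'I_3) (sg sg' : bool) (b : B) :
  one_sided_block u v m sg b -> one_sided_block u v m' sg' b -> m = m' /\ sg = sg'.
Proof.
case: conf => _ size3 _ _ /and3P[ub vb /forallP H1] /and3P[_ _ /forallP H2].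
have [y [z [yz]]] := card3_other_two (size3 b) ub.
rewrite !inE => /andP[yu yb] /andP[zu zb].
have nuv w : w \in blk b -> w != u -> w \notin [set u; v].
  by move=> wb wu; rewrite !inE negb_or wu; apply: contraNneq vb => <-.
have cyz := proper yb zb yz (nuv y yb yu) (nuv z zb zu).
move: (H1 y) (H1 z) (H2 y) (H2 z); rewrite yb zb yu zu /= => /eqP a1 /eqP a2 /eqP a3 /eqP a4.
have Em : m = m' by apply: (pair_class_unique cyz); [rewrite a1 a2 | rewrite a3 a4].
by split => //; rewrite -a1 -a3 Em.
Qed.

(* Each one-sided type (m, sg) is realised by a block through u avoiding v,
   and distinct types by distinct blocks. *)
Lemma card_one_sided :
  #|[set p | one_sided u v p.1 p.2]| + collinear u v <= 3.
Proof.
pose type b := odflt (ord0, false) [pick p | one_sided_block u v p.1 p.2 b].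
pose avoiding := [set b | (u \in blk b) && (v \notin blk b)].
have sub : [set p | one_sided u v p.1 p.2] \subset type @: avoiding.
  apply/subsetP => -[m sg]; rewrite inE => /existsP[b Hb]; apply/imsetP; exists b.
    by case/and3P: Hb => ub vb _; rewrite inE ub vb.
  rewrite /type; case: pickP => [[m' sg'] Hb'|none] /=.
    by case: (one_sided_block_unique Hb Hb') => /= -> ->.
  by have := none (m, sg); rewrite Hb.
apply: leq_trans (card_blocks_avoiding u v); rewrite leq_add2r.
exact: leq_trans (subset_leq_card sub) (leq_imset_card _ _).
Qed.

Lemma one_sided_supply :
  \sum_(m < 3) (one_sided u v m true + one_sided u v m false) + collinear u v <= 3.
Proof.
by have := card_one_sided; rewrite (card_splitting_class (fun p => one_sided u v p.1 p.2)).
Qed.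

Definition two_colouring (m : 'I_3) (cu cv : bool) (x : P) : bool :=
  if x == u then cu else if x == v then cv else pair_class m (c x).

Lemma monochromatic_block (m : 'I_3) (cu cv : bool) (b : B) :
  u != v -> {in blk b &, forall x y, two_colouring m cu cv x = two_colouring m cu cv y} ->
  [|| one_sided u v m cu, one_sided v u m cv | (cu == cv) && collinear u v].
Proof.
case: conf => _ size3 _ _ uv mono.
have gu : two_colouring m cu cv u = cu by rewrite /two_colouring eqxx.
have gv : two_colouring m cu cv v = cv by rewrite /two_colouring eq_sym (negbTE uv) eqxx.
have gx x : x != u -> x != v -> two_colouring m cu cv x = pair_class m (c x).
  by move=> xu xv; rewrite /two_colouring (negbTE xu) (negbTE xv).
case ub: (u \in blk b); case vb: (v \in blk b).
- have := mono u v ub vb; rewrite gu gv => ->; rewrite eqxx /=.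
  by apply/or3P/Or33/existsP; exists b; rewrite ub vb.
- apply/or3P/Or31/existsP; exists b; rewrite /one_sided_block ub vb /=.
  apply/forall_inP => x xb; apply/implyP => xu.
  have xv : x != v by apply: contraFneq vb => <-.
  by rewrite -(gx x xu xv) (mono x u xb ub) gu.
- apply/or3P/Or32/existsP; exists b; rewrite /one_sided_block ub vb /=.
  apply/forall_inP => x xb; apply/implyP => xv.
  have xu : x != u by apply: contraFneq ub => <-.
  by rewrite -(gx x xu xv) (mono x v xb vb) gv.
- exfalso; have [x xb] : exists x, x \in blk b.
    by apply/card_gt0P; rewrite size3.
  have [y [z [yz]]] := card3_other_two (size3 b) xb.
  rewrite !inE => /andP[yx yb] /andP[zx zb].
  have away w : w \in blk b -> (w != u) && (w != v) && (w \notin [set u; v]).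
    move=> wb; have wu : w != u by apply: contraFneq ub => <-.
    have wv : w != v by apply: contraFneq vb => <-.
    by rewrite !inE negb_or wu wv.
  have /andP[/andP[xu xv] xD] := away x xb.
  have /andP[/andP[yu yv] yD] := away y yb.
  have /andP[/andP[zu zv] zD] := away z zb.
  apply: (@pair_class_three (c x) (c y) (c z) m).
  + by apply: proper xb yb _ xD yD; rewrite eq_sym.
  + by apply: proper xb zb _ xD zD; rewrite eq_sym.
  + exact: proper yb zb yz yD zD.
  + by rewrite -(gx x xu xv) -(gx y yu yv); apply: mono.
  + by rewrite -(gx x xu xv) -(gx z zu zv); apply: mono.
Qed.

End FixedPair.

End OneSidedBlocks.

(* The four demands (cu, cv) of one splitting, written as pair counts: either
   u needs both classes, or v does, or each needs one and u, v are collinear. *)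
Lemma partition_demand (a b : bool -> bool) (sh : bool) :
  (forall cu cv : bool, [|| a cu, b cv | (cu == cv) && sh]) ->
  a true + a false = 2 \/ b true + b false = 2 \/
    (0 < a true + a false /\ 0 < b true + b false /\ sh).
Proof.
move=> H; move: (H false true) (H true false) (H false false) (H true true); clear H.
by case: (a true) (a false) (b true) (b false) sh => [] [] [] [] []; auto.
Qed.

(* The demands of the three splittings cannot be met by the supplies of one-sided
   blocks at u and at v. *)
Lemma supply_exhausted (x y : 'I_3 -> nat) (sh : bool) :
  \sum_(m < 3) x m + sh <= 3 -> \sum_(m < 3) y m + sh <= 3 ->
  (forall m, x m = 2 \/ y m = 2 \/ (0 < x m /\ 0 < y m /\ sh)) -> False.
Proof.
rewrite !big_ord_recl big_ord0 => Hx Hy D.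
move: (D ord0) (D (lift ord0 ord0)) (D (lift ord0 (lift ord0 ord0))) Hx Hy; clear D.
by case: sh; lia.
Qed.

Lemma some_candidate_is_weak (P B : finType) (blk : B -> {set P}) (c : P -> 'I_4) (u v : P) :
  sym_config_v3 blk -> u != v -> proper_outside blk [set u; v] c ->
  exists m cu cv, forall b, exists x y,
    [/\ x \in blk b, y \in blk b & two_colouring c u v m cu cv x != two_colouring c u v m cu cv y].
Proof.
move=> conf uv proper.
have proper' : proper_outside blk [set v; u] c by rewrite setUC.
pose weak m cu cv := [forall b, [exists x in blk b, [exists y in blk b,
  two_colouring c u v m cu cv x != two_colouring c u v m cu cv y]]].
have [|none] := boolP [exists m, exists cu, exists cv, weak m cu cv].
  case/existsP=> m /existsP[cu /existsP[cv /forallP W]]; exists m, cu, cv => b.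
  by have /exists_inP[x xb /exists_inP[y yb xy]] := W b; exists x, y.
exfalso; have demand m cu cv :
    [|| one_sided blk c u v m cu, one_sided blk c v u m cv | (cu == cv) && collinear blk u v].
  have : ~~ weak m cu cv by apply: contra none => W; apply/existsP; exists m;
    apply/existsP; exists cu; apply/existsP; exists cv.
  rewrite negb_forall => /existsP[b mono]; apply: (monochromatic_block conf proper (b := b) uv).
  move=> x y xb yb; apply/eqP; apply: contraNT mono => xy.
  by apply/exists_inP; exists x => //; apply/exists_inP; exists y.
have supply_v := one_sided_supply conf proper'; rewrite collinearC in supply_v.
pose demand_at w z m := one_sided blk c w z m true + one_sided blk c w z m false.
apply: (@supply_exhausted (demand_at u v) (demand_at v u) (collinear blk u v)
  (one_sided_supply conf proper) supply_v) => m.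
exact: partition_demand (demand m).
Qed.

Lemma weak_colouring_of_bool (P B : finType) (blk : B -> {set P}) (g : P -> bool) :
  (forall b, exists x y, [/\ x \in blk b, y \in blk b & g x != g y]) ->
  exists col : P -> 'I_2, weak_colouring blk col.
Proof.
move=> W; exists (fun x => if g x then ord_max else ord0) => b.
have [x [y [xb yb gxy]]] := W b; exists x, y; split => //.
by move: gxy; case: (g x); case: (g y).
Qed.

Theorem mainTheorem17 (P B : finType) (blk : B -> {set P}) :
  sym_config_v3 blk ->
  strong_chromatic_number blk 5 ->
  (exists (T : {set P}) (c : P -> 'I_4),
      #|T| <= 2 /\
      (forall b x y, x \in blk b -> y \in blk b -> x != y ->
         x \notin T -> y \notin T -> c x != c y)) ->
  weak_chromatic_number blk 2.
Proof.
move=> conf [_ no_strong] [T [c [T2 properT]]].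
have [b0 _|noB] := pickP (@predT B); last first.
  by case: (no_strong 4 isT); exists (fun _ => ord0) => b; have := noB b.
have [p [q [_ _ pq]]] : exists p q, [/\ p \in blk b0, q \in blk b0 & p != q].
  by apply/card_gt1P; case: conf => _ -> _ _.
have [t [s [ts Ts]]] := two_point_cover pq T2.
have proper := proper_outside_sub Ts (properT : proper_outside blk T c).
have [m [cu [cv W]]] := some_candidate_is_weak conf ts proper.
split; first exact: weak_colouring_of_bool W.
move=> k k2 [col weak]; have [x [y [_ _]]] := weak b0.
by rewrite (ord_lt2_eq (col x) (col y) k2) eqxx.
Qed.
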